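(* Let $\mathbb{X}$ be a linearly ordered radicable idempotent semifield, $n\ge1$, $\bm{A}\in\mathbb{X}^{n\times n}$ with spectral radius $\lambda=\bigoplus_{k=1}^{n}(\mathrm{tr}\,\bm{A}^{k})^{1/k}$, $\bm{p},\bm{g}\in\mathbb{X}^n$, $\bm{q},\bm{h}\in\mathbb{X}^n$ regular vectors, and $r\in\mathbb{X}$, such that $\bm{h}^{-}\bm{g}\le\mathbb{1}$ and $\lambda\oplus(\bm{q}^{-}\bm{p})^{1/2}\oplus r>\mathbb{0}$. Consider minimizing $\bm{x}^{-}\bm{A}\bm{x}\oplus\bm{x}^{-}\bm{p}\oplus\bm{q}^{-}\bm{x}\oplus r$ over regular $\bm{x}\in\mathbb{X}^n$ subject to $\bm{g}\le\bm{x}\le\bm{h}$. Then the minimum value is $$\theta=\lambda\oplus\bigoplus_{k=1}^{n-1}(\bm{h}^{-}\bm{A}^{k}\bm{g})^{1/k}\oplus\bigoplus_{k=0}^{n-1}(\bm{q}^{-}\bm{A}^{k}\bm{g}\oplus\bm{h}^{-}\bm{A}^{k}\bm{p})^{1/(k+1)}\oplus\bigoplus_{k=0}^{n-1}(\bm{q}^{-}\bm{A}^{k}\bm{p})^{1/(k+2)}\oplus r,$$ and all regular solutions are exactly the vectors $\bm{x}=(\theta^{-1}\bm{A})^{\ast}\bm{u}$ with $\bm{u}$ any vector satisfying $\theta^{-1}\bm{p}\oplus\bm{g}\le\bm{u}\le\big((\theta^{-1}\bm{q}^{-}\oplus\bm{h}^{-})(\theta^{-1}\bm{A})^{\ast}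\big)^{-}$.
   Context: An idempotent semifield is $(\mathbb{X},\oplus,\otimes,\mathbb{0},\mathbb{1})$ where $(\mathbb{X},\oplus,\mathbb{0})$ is a commutative monoid with idempotent addition, $(\mathbb{X}\setminus\{\mathbb{0}\},\otimes,\mathbb{1})$ is an abelian group, and $\otimes$ distributes over $\oplus$; the product sign is omitted. The order is $x\le y$ iff $x\oplus y=y$, assumed linear; ''minimum'' refers to this order. Radicable means $x^m=a$ is solvable for all $a$ and integers $m\ge1$, so rational powers are defined. Matrix/vector operations use $\oplus,\otimes$; inequalities are entrywise. $\bm{I}$ is the identity matrix, $\bm{A}^0=\bm{I}$. A vector is regular if all entries are nonzero. For a nonzero vector $\bm{x}$, $\bm{x}^{-}$ is the transposed vector with entries $x_i^{-1}$ if $x_i\ne\mathbb{0}$ and $\mathbb{0}$ otherwise. $\mathrm{tr}\,\bm{A}=a_{11}\oplus\cdots\oplus a_{nn}$; $\bm{A}^{\ast}=\bm{I}\oplus\bm{A}\oplus\cdots\oplus\bm{A}^{n-1}$. *)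

From mathcomp Require Import all_boot.
From Stdlib Require Import ClassicalEpsilon.

Set Implicit Arguments.
Unset Strict Implicit.
Unset Printing Implicit Defensive.

Record isemifield := ISemifield {
  car :> eqType;
  szero : car;
  sone : car;
  sadd : car -> car -> car;
  smul : car -> car -> car;
  sinv : car -> car;   (* multiplicative inverse; its value at szero is irrelevant *)
  addA : forall x y z, sadd x (sadd y z) = sadd (sadd x y) z;
  addC : forall x y, sadd x y = sadd y x;
  add0x : forall x, sadd szero x = x;
  addxx : forall x, sadd x x = x;
  mulA : forall x y z, smul x (smul y z) = smul (smul x y) z;
  mulC : forall x y, smul x y = smul y x;
  mul1x : forall x, smul sone x = x;
  mul0x : forall x, smul szero x = szero;
  mulVx : forall x, x != szero -> smul (sinv x) x = sone;
  one_neq0 : sone != szero;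
  mulDr : forall x y z, smul x (sadd y z) = sadd (smul x y) (smul x z);
  (* the order x <= y iff x (+) y = y is linear *)
  add_linear : forall x y, sadd x y = x \/ sadd x y = y;
  radicable : forall (a : car) (m : nat), (0 < m)%N ->
      exists x : car, iter m (smul x) sone = a
}.

Arguments szero {i}.
Arguments sone {i}.
Arguments sadd {i}.
Arguments smul {i}.
Arguments sinv {i}.

Section Ops.
Variable X : isemifield.

Definition sle (x y : X) : Prop := sadd x y = y.

Definition spow (x : X) (m : nat) : X := iter m (smul x) sone.
Definition sroot (m : nat) (a : X) : X :=
  epsilon (inhabits a) (fun x : X => spow x m = a).

Definition vec (n : nat) := 'I_n -> X.
Definition mat (n : nat) := 'I_n -> 'I_n -> X.

Definition vle n (u v : vec n) : Prop := forall i, sle (u i) (v i).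
Definition vadd n (u v : vec n) : vec n := fun i => sadd (u i) (v i).
Definition vscale n (a : X) (u : vec n) : vec n := fun i => smul a (u i).
Definition regular n (x : vec n) : Prop := forall i, x i != szero.

(* x^- : entries x_i^{-1} if x_i <> 0 and 0 otherwise (row <-> column) *)
Definition conj n (x : vec n) : vec n :=
  fun i => if x i == szero then szero else sinv (x i).

Definition dot n (u v : vec n) : X := \big[sadd/szero]_(i < n) smul (u i) (v i).

Definition mmul n (A B : mat n) : mat n :=
  fun i j => \big[sadd/szero]_(k < n) smul (A i k) (B k j).
Definition madd n (A B : mat n) : mat n := fun i j => sadd (A i j) (B i j).
Definition mscale n (a : X) (A : mat n) : mat n := fun i j => smul a (A i j).
Definition mid n : mat n := fun i j => if i == j then sone else szero.
Definition mpow n (A : mat n) (k : nat) : mat n := iter k (mmul A) (@mid n).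
Definition mvec n (A : mat n) (v : vec n) : vec n :=
  fun i => \big[sadd/szero]_(j < n) smul (A i j) (v j).
Definition vecm n (u : vec n) (A : mat n) : vec n :=
  fun j => \big[sadd/szero]_(i < n) smul (u i) (A i j).
Definition mtr n (A : mat n) : X := \big[sadd/szero]_(i < n) A i i.

Definition mstar n (A : mat n) : mat n :=
  fun i j => \big[sadd/szero]_(k < n) mpow A k i j.

Definition specrad n (A : mat n) : X :=
  \big[sadd/szero]_(1 <= k < n.+1) sroot k (mtr (mpow A k)).

End Ops.

(* For regular x, objective x <= t splits into A x <= t x, p <= t x, q^- x <= t and r <= t.
   Iterating the first gives A^k x <= t^k x, and together with g <= x <= h every quantity under
   a root in theta is bounded by the matching power of t; hence theta <= objective x.
   The same quantities, bounded by powers of theta itself, give tr((theta^-1 A)^k) <= 1 for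
   k <= n, so every power of C = theta^-1 A is dominated by C^*: a walk longer than n contains
   a closed subwalk, of weight at most 1, that can be removed. Hence x = C^* u satisfies
   C x <= x, i.e. A x <= theta x, and the bounds on u give the remaining conditions with
   t = theta; conversely a solution satisfies C x <= x, so C^* x = x and u = x works.
   Finally the terms of theta show that the lower bound for u lies below the upper one,
   which produces a solution. *)

From mathcomp Require Import all_boot zify.
From Stdlib Require Import ClassicalEpsilon FunctionalExtensionality.

Set Implicit Arguments.
Unset Strict Implicit.
Unset Printing Implicit Defensive.

Local Notation "x ⊕ y" := (sadd x y) (at level 50, left associativity).
Local Notation "x ⊗ y" := (smul x y) (at level 40, left associativity).
Local Notation "x ≼ y" := (sle x y) (at level 70, no associativity).

Section Semifield.
Variable X : isemifield.
Implicit Types a c t x y z : X.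

Lemma mulx1 x : x ⊗ sone = x. Proof. by rewrite mulC mul1x. Qed.
Lemma mulx0 x : x ⊗ szero = szero. Proof. by rewrite mulC mul0x. Qed.
Lemma mulDl x y z : (x ⊕ y) ⊗ z = x ⊗ z ⊕ y ⊗ z.
Proof. by rewrite mulC mulDr !(mulC z). Qed.
Lemma mulxV x : x != szero -> x ⊗ sinv x = sone.
Proof. by move=> x0; rewrite mulC mulVx. Qed.
Lemma mulCA x y z : x ⊗ (y ⊗ z) = y ⊗ (x ⊗ z).
Proof. by rewrite !mulA (mulC x). Qed.
Lemma mul_interchange3 a b c x y z :
  a ⊗ x ⊗ (c ⊗ y) ⊗ (b ⊗ z) = a ⊗ c ⊗ b ⊗ (x ⊗ y ⊗ z).
Proof.
by rewrite -!mulA; congr (a ⊗ _); rewrite mulCA; congr (c ⊗ _); rewrite (mulCA y) (mulCA x).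
Qed.
Lemma mulKx a x : a != szero -> sinv a ⊗ (a ⊗ x) = x.
Proof. by move=> a0; rewrite mulA mulVx // mul1x. Qed.

Lemma inv_neq0 x : x != szero -> sinv x != szero.
Proof.
move=> x0; apply/eqP => ix0; have := one_neq0 X.
by rewrite -(mulVx x0) ix0 mul0x eqxx.
Qed.

Lemma mul_neq0 x y : x != szero -> y != szero -> x ⊗ y != szero.
Proof.
move=> x0 y0; apply/eqP => xy0; move: y0.
by rewrite -(mulKx y x0) xy0 mulx0 eqxx.
Qed.

Lemma sle_refl x : x ≼ x. Proof. exact: addxx. Qed.
Lemma sle_trans y x z : x ≼ y -> y ≼ z -> x ≼ z.
Proof. by rewrite /sle => xy yz; rewrite -yz addA xy. Qed.
Lemma sle_anti x y : x ≼ y -> y ≼ x -> x = y.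
Proof. by rewrite /sle => xy yx; rewrite -xy addC yx. Qed.
Lemma sle_total x y : x ≼ y \/ y ≼ x.
Proof. by rewrite /sle; case: (add_linear x y) => xy; [right; rewrite addC | left]. Qed.
Lemma sle0x x : szero ≼ x. Proof. exact: add0x. Qed.
Lemma sle_addl x y : x ≼ x ⊕ y. Proof. by rewrite /sle addA addxx. Qed.
Lemma sle_addr x y : y ≼ x ⊕ y. Proof. by rewrite addC; apply: sle_addl. Qed.

Lemma sadd_leP x y z : x ⊕ y ≼ z <-> x ≼ z /\ y ≼ z.
Proof.
split=> [xyz | [xz yz]]; last by rewrite /sle -addA yz xz.
by split; apply: sle_trans xyz; [apply: sle_addl | apply: sle_addr].
Qed.

Lemma sadd_le x y z : x ≼ z -> y ≼ z -> x ⊕ y ≼ z.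
Proof. by move=> xz yz; apply/sadd_leP. Qed.

Lemma sle_mul2l c x y : x ≼ y -> c ⊗ x ≼ c ⊗ y.
Proof. by rewrite /sle => xy; rewrite -mulDr xy. Qed.
Lemma sle_mul2r c x y : x ≼ y -> x ⊗ c ≼ y ⊗ c.
Proof. by rewrite !(mulC _ c); apply: sle_mul2l. Qed.
Lemma sle_mul2 x y x' y' : x ≼ x' -> y ≼ y' -> x ⊗ y ≼ x' ⊗ y'.
Proof. by move=> xx' yy'; apply: sle_trans (sle_mul2l _ yy') (sle_mul2r _ xx'). Qed.
Lemma sle_mull_ge1 x c : sone ≼ c -> x ≼ c ⊗ x.
Proof. by move=> c1; rewrite -{1}(mul1x x); apply: sle_mul2r. Qed.

Lemma sle_neq0 x y : x ≼ y -> x != szero -> y != szero.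
Proof.
move=> xy x0; apply: contra_neq x0 => y0.
by apply: sle_anti (sle0x _); rewrite -y0.
Qed.

Lemma sle_pmul2l a x y : a != szero -> a ⊗ x ≼ a ⊗ y <-> x ≼ y.
Proof. by move=> a0; split=> [/(sle_mul2l (sinv a)) |]; [rewrite !mulKx | apply: sle_mul2l]. Qed.

Lemma sle_invMl a c t : a != szero -> sinv a ⊗ c ≼ t <-> c ≼ t ⊗ a.
Proof. by move=> a0; rewrite -(sle_pmul2l _ _ a0) mulA mulxV // mul1x mulC. Qed.

Lemma sle_invr a c : a != szero -> c ≼ sinv a <-> a ⊗ c ≼ sone.
Proof. by move=> a0; rewrite -(sle_pmul2l c (sinv a) a0) mulxV. Qed.

End Semifield.

Section BigSum.
Variables (X : isemifield) (I : eqType).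
Implicit Types (r : seq I) (P : pred I) (F : I -> X) (c : X).

Lemma sle_big r P F i : i \in r -> P i -> F i ≼ \big[sadd/szero]_(j <- r | P j) F j.
Proof.
elim: r => //= a r IHr; rewrite in_cons big_cons => /orP[/eqP <- -> | ir Pi].
  exact: sle_addl.
by case: (P a); [apply: sle_trans (IHr ir Pi) (sle_addr _ _) | apply: IHr].
Qed.

Lemma big_sle r P F c :
  (forall i, i \in r -> P i -> F i ≼ c) -> \big[sadd/szero]_(j <- r | P j) F j ≼ c.
Proof.
elim: r => [|a r IHr] Fc; first by rewrite big_nil; apply: sle0x.
have Fc' : \big[sadd/szero]_(j <- r | P j) F j ≼ c.
  by apply: IHr => i ir; apply: Fc; rewrite in_cons ir orbT.
rewrite big_cons; case Pa: (P a) => //.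
by apply: sadd_le Fc'; apply: Fc; rewrite ?in_cons ?eqxx.
Qed.

Lemma smul_bigr r P F c :
  c ⊗ \big[sadd/szero]_(j <- r | P j) F j = \big[sadd/szero]_(j <- r | P j) (c ⊗ F j).
Proof.
elim: r => [|a r IHr]; first by rewrite !big_nil mulx0.
by rewrite !big_cons; case: (P a); rewrite // mulDr IHr.
Qed.

Lemma smul_bigl r P F c :
  (\big[sadd/szero]_(j <- r | P j) F j) ⊗ c = \big[sadd/szero]_(j <- r | P j) (F j ⊗ c).
Proof. by rewrite mulC smul_bigr; apply: eq_bigr => i _; apply: mulC. Qed.

Lemma big_attained r P F :
  \big[sadd/szero]_(j <- r | P j) F j = szero \/
  exists i, \big[sadd/szero]_(j <- r | P j) F j = F i.
Proof.
elim: r => [|a r IHr]; first by left; rewrite big_nil.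
rewrite big_cons; case: (P a) => //.
by case: (add_linear (F a) (\big[sadd/szero]_(j <- r | P j) F j)) => -> //; right; exists a.
Qed.

End BigSum.

Section OrdinalSum.
Variables (X : isemifield) (n : nat).
Implicit Types (F G : 'I_n -> X) (c : X).

Lemma sle_bigI F i : F i ≼ \big[sadd/szero]_(j < n) F j.
Proof. by apply: sle_big; rewrite ?mem_index_enum. Qed.

Lemma bigI_sle F c : (forall i, F i ≼ c) -> \big[sadd/szero]_(j < n) F j ≼ c.
Proof. by move=> Fc; apply: big_sle => i _ _; apply: Fc. Qed.

Lemma bigI_sleP F c : \big[sadd/szero]_(j < n) F j ≼ c <-> forall i, F i ≼ c.
Proof. by split=> [Fc i | /bigI_sle //]; apply: sle_trans Fc; apply: sle_bigI. Qed.

Lemma sle_bigI2 F G : (forall i, F i ≼ G i) ->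
  \big[sadd/szero]_(j < n) F j ≼ \big[sadd/szero]_(j < n) G j.
Proof. by move=> FG; apply: bigI_sle => i; apply: sle_trans (FG i) (sle_bigI _ _). Qed.

End OrdinalSum.

Section PowerRoot.
Variable X : isemifield.
Implicit Types a c t x y : X.

Lemma spowS x k : spow x k.+1 = x ⊗ spow x k. Proof. by []. Qed.

Lemma spow_le x y k : x ≼ y -> spow x k ≼ spow y k.
Proof. by move=> xy; elim: k => [|k IHk]; [apply: sle_refl | apply: sle_mul2]. Qed.

Lemma spowMn x y k : spow (x ⊗ y) k = spow x k ⊗ spow y k.
Proof. by elim: k => [|k IHk]; rewrite /= ?mul1x // IHk -!mulA (mulCA y). Qed.

Lemma spow1 k : spow (sone : X) k = sone.
Proof. by elim: k => //= k ->; rewrite mul1x. Qed.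

Lemma spow_neq0 x k : x != szero -> spow x k != szero.
Proof. by move=> x0; elim: k => [|k IHk]; [apply: one_neq0 | apply: mul_neq0]. Qed.

Lemma spowVx x k : x != szero -> spow (sinv x) k ⊗ spow x k = sone.
Proof. by move=> x0; rewrite -spowMn mulVx // spow1. Qed.

Lemma sle_spow c k : sone ≼ c -> (0 < k)%N -> c ≼ spow c k.
Proof.
move=> c1; case: k => // k _; rewrite spowS -{1}(mulx1 c).
by apply: sle_mul2l; rewrite -(spow1 k); apply: spow_le.
Qed.

Lemma spow_inj_le x y k : (0 < k)%N -> x ≼ y -> spow x k = spow y k -> x = y.
Proof.
move=> k0 xy xyk; have [x0|x0] := eqVneq x szero.
  have spow0 : spow x k = szero by rewrite x0; case: k k0 {xyk} => // k _; rewrite spowS mul0x.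
  have [-> //|y0] := eqVneq y szero.
  by move: (spow_neq0 k y0); rewrite -xyk spow0 eqxx.
pose c := sinv x ⊗ y; have yE : y = x ⊗ c by rewrite /c mulA mulxV // mul1x.
have c1 : sone ≼ c by rewrite -(sle_pmul2l _ _ x0) mulx1 -yE.
have ck : spow c k = sone.
  have := congr1 (smul (sinv (spow x k))) xyk.
  by rewrite yE spowMn mulKx ?spow_neq0 // mulVx ?spow_neq0.
have c_le1 : c ≼ sone by rewrite -ck; apply: sle_spow.
by rewrite yE (sle_anti c_le1 c1) mulx1.
Qed.

Lemma srootK k a : (0 < k)%N -> spow (sroot k a) k = a.
Proof.
move=> k0; apply: (epsilon_spec (inhabits a) (fun x : X => spow x k = a)).
by have [x xa] := radicable a k0; exists x.
Qed.

Lemma sroot_leP k a t : (0 < k)%N -> sroot k a ≼ t <-> a ≼ spow t k.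
Proof.
move=> k0; split=> [rt | ak]; first by rewrite -(srootK a k0); apply: spow_le.
have [//|tr] := sle_total (sroot k a) t.
suff -> : sroot k a = t by apply: sle_refl.
apply/esym/(spow_inj_le k0 tr)/sle_anti; first exact: spow_le.
by rewrite srootK.
Qed.

Lemma sle_big_sroot (e : nat -> nat) (F : nat -> X) (a b k : nat) t :
  (a <= k < b)%N -> (0 < e k)%N ->
  \big[sadd/szero]_(a <= j < b) sroot (e j) (F j) ≼ t -> F k ≼ spow t (e k).
Proof.
move=> kab ek0 St; rewrite -sroot_leP //; apply: sle_trans St.
by apply: (sle_big (fun j => sroot (e j) (F j))); rewrite ?mem_index_iota.
Qed.

End PowerRoot.

Section Matrix.
Variables (X : isemifield) (n : nat).
Implicit Types (A C : mat X n) (u v x : vec X n) (c t : X).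

Lemma mpowS A k : mpow A k.+1 = mmul A (mpow A k). Proof. by []. Qed.

Lemma conjE v i : v i != szero -> conj v i = sinv (v i).
Proof. by move=> vi0; rewrite /conj (negbTE vi0). Qed.

Lemma dot_term u v i : u i ⊗ v i ≼ dot u v.
Proof. exact: (sle_bigI (fun i => u i ⊗ v i)). Qed.

Lemma mvec_term A v i j : A i j ⊗ v j ≼ mvec A v i.
Proof. exact: (sle_bigI (fun j => A i j ⊗ v j)). Qed.

Lemma mvec_le A u v i : (forall j, u j ≼ v j) -> mvec A u i ≼ mvec A v i.
Proof. by move=> uv; apply: sle_bigI2 => j; apply: sle_mul2l. Qed.

Lemma mvec_vscale A c v i : mvec A (vscale c v) i = c ⊗ mvec A v i.
Proof. by rewrite /mvec smul_bigr; apply: eq_bigr => j _; rewrite mulCA. Qed.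

Lemma mvec_mscale A c v i : mvec (mscale c A) v i = c ⊗ mvec A v i.
Proof. by rewrite /mvec smul_bigr; apply: eq_bigr => j _; rewrite mulA. Qed.

Lemma mvec_mid v i : mvec (@mid X n) v i = v i.
Proof.
apply: sle_anti; last first.
  by apply: sle_trans (mvec_term _ _ i i); rewrite /mid eqxx mul1x; apply: sle_refl.
apply: bigI_sle => j; rewrite /mid; have [<-|_] := eqVneq i j.
  by rewrite mul1x; apply: sle_refl.
by rewrite mul0x; apply: sle0x.
Qed.

Lemma mvec_mpow0 A v : mvec (mpow A 0) v = v.
Proof. by apply: functional_extensionality => i; apply: mvec_mid. Qed.

Lemma mpow_mscale A c k i j : mpow (mscale c A) k i j = spow c k ⊗ mpow A k i j.
Proof.
elim: k i j => [|k IHk] i j; first by rewrite /= mul1x.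
rewrite !mpowS /mmul smul_bigr; apply: eq_bigr => l _.
by rewrite IHk /mscale -!mulA (mulCA (A i l)).
Qed.

Lemma mvec_mpow_le A x t k i :
  (forall i, mvec A x i ≼ t ⊗ x i) -> mvec (mpow A k) x i ≼ spow t k ⊗ x i.
Proof.
move=> Ax; elim: k i => [|k IHk] i; first by rewrite /= mvec_mid mul1x; apply: sle_refl.
apply: bigI_sle => j; rewrite /mmul smul_bigl; apply: bigI_sle => l.
rewrite -mulA; apply: sle_trans (sle_mul2l _ (sle_trans (mvec_term _ _ l j) (IHk l))) _.
rewrite mulCA spowS (mulC t) -mulA; apply: sle_mul2l.
exact: sle_trans (mvec_term _ _ i l) (Ax i).
Qed.

End Matrix.

Section KleeneStar.
Variables (X : isemifield) (n : nat) (C : mat X n).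
Implicit Types (f : nat -> 'I_n) (u x : vec X n).

Fixpoint walk_weight f m : X :=
  if m is m'.+1 then C (f 0%N) (f 1%N) ⊗ walk_weight (fun t => f t.+1) m' else sone.

Lemma eq_walk_weight f f' m :
  (forall t, (t <= m)%N -> f t = f' t) -> walk_weight f m = walk_weight f' m.
Proof.
elim: m f f' => [//|m IHm] f f' ff' /=.
by rewrite !ff' //; congr (_ ⊗ _); apply: IHm => t tm; apply: ff'.
Qed.

Lemma walk_weight_cat f a m :
  walk_weight f (a + m) = walk_weight f a ⊗ walk_weight (fun t => f (a + t)%N) m.
Proof.
elim: a f => [|a IHa] f; last by rewrite addSn /= IHa mulA.
by rewrite /= mul1x; apply: eq_walk_weight => t _; rewrite add0n.
Qed.

Lemma walk_weight_le_mpow f m : walk_weight f m ≼ mpow C m (f 0%N) (f m).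
Proof.
elim: m f => [|m IHm] f /=; first by rewrite /mid eqxx; apply: sle_refl.
apply: sle_trans (sle_bigI _ (f 1%N)); apply: sle_mul2l.
exact: (IHm (fun t => f t.+1)).
Qed.

Lemma mpow_walk m i j : mpow C m i j = szero \/
  exists f, [/\ f 0%N = i, f m = j & mpow C m i j = walk_weight f m].
Proof.
elim: m i j => [|m IHm] i j.
  rewrite /= /mid; have [<-|_] := eqVneq i j; last by left.
  by right; exists (fun _ => i).
rewrite mpowS /mmul.
have [->|[l ->]] := big_attained (index_enum 'I_n) xpredT (fun l => C i l ⊗ mpow C m l j).
  by left.
have [->|[f [f0 fm ->]]] := IHm l j; first by left; rewrite mulx0.
by right; exists (fun t => if t is t'.+1 then f t' else i); rewrite /= f0.
Qed.

Lemma exists_repeat f : exists a b, [/\ (a < b)%N, (b <= n)%N & f a = f b].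
Proof.
pose g (k : 'I_n.+1) := f k.
have /injectivePn [a [b ab gab]] : ~~ injectiveb g.
  by apply/injectiveP => /leq_card; rewrite !card_ord ltnn.
have b_n := ltn_ord b; have a_n := ltn_ord a.
have [ab'|ba'|/val_inj abE] := ltngtP a b; last by rewrite abE eqxx in ab.
  by exists a, b.
by exists b, a.
Qed.

Lemma mstar_diag_ge1 i : sone ≼ mstar C i i.
Proof.
have n0 : (0 < n)%N by apply: leq_ltn_trans (ltn_ord i).
apply: sle_trans (sle_bigI (fun k : 'I_n => mpow C k i i) (Ordinal n0)).
by rewrite /= /mid eqxx; apply: sle_refl.
Qed.

Lemma mvec_mstar_ge x i : x i ≼ mvec (mstar C) x i.
Proof. by apply: sle_trans (mvec_term _ _ i i); apply: sle_mull_ge1; apply: mstar_diag_ge1. Qed.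

Lemma mvec_mstar_id x : (forall i, mvec C x i ≼ x i) -> mvec (mstar C) x = x.
Proof.
move=> Cx; apply: functional_extensionality => i; apply: sle_anti; last exact: mvec_mstar_ge.
apply: bigI_sle => j; rewrite /mstar smul_bigl; apply: bigI_sle => k.
have Ckx : mvec (mpow C k) x i ≼ x i.
  by rewrite -[x i]mul1x -(spow1 _ k); apply: mvec_mpow_le => l; rewrite mul1x.
exact: sle_trans (mvec_term _ _ i j) Ckx.
Qed.

Hypothesis trace_mpow_le1 : forall k, (0 < k)%N -> (k <= n)%N -> mtr (mpow C k) ≼ sone.

Lemma cycle_weight_le1 f m :
  (0 < m)%N -> (m <= n)%N -> f m = f 0%N -> walk_weight f m ≼ sone.
Proof.
move=> m0 mn fm; apply: sle_trans (walk_weight_le_mpow f m) _; rewrite fm.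
exact: sle_trans (sle_bigI (fun i => mpow C m i i) _) (trace_mpow_le1 m0 mn).
Qed.

(* Cut out the closed subwalk f a, ..., f b, whose weight is at most 1. *)
Lemma walk_weight_drop_cycle f a b m : (a < b)%N -> (b <= n)%N -> (b <= m)%N -> f a = f b ->
  walk_weight f m ≼
  walk_weight (fun t => if (t < a)%N then f t else f (t + (b - a))%N) (m - (b - a)).
Proof.
move=> ab bn bm fab; set L := (b - a)%N; set f' := fun t => _.
have -> : m = (a + (L + (m - b)))%N by rewrite /L; lia.
have -> : (a + (L + (m - b)) - L = a + (m - b))%N by rewrite /L; lia.
rewrite !walk_weight_cat.
have -> : walk_weight f' a = walk_weight f a.
  apply: eq_walk_weight => t ta; rewrite /f'; case: ltnP => // at_.
  have -> : t = a by lia.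
  by rewrite fab; congr f; rewrite /L; lia.
have -> : walk_weight (fun t => f' (a + t)%N) (m - b) =
          walk_weight (fun t => f (a + (L + t))%N) (m - b).
  by apply: eq_walk_weight => t _; rewrite /f' ltnNge leq_addr /=; congr f; lia.
apply: sle_mul2l; rewrite -[Y in _ ≼ Y]mul1x; apply: sle_mul2r.
by apply: cycle_weight_le1; rewrite /L ?addn0 ?fab; [lia | lia | congr f; lia].
Qed.

Lemma walk_weight_le_mstar m f : walk_weight f m ≼ mstar C (f 0%N) (f m).
Proof.
elim/ltn_ind: m f => m IHm f.
have [mn|nm] := ltnP m n.
  apply: sle_trans (walk_weight_le_mpow f m) _.
  exact: (sle_bigI (fun k : 'I_n => mpow C k _ _) (Ordinal mn)).
have [a [b [ab bn fab]]] := exists_repeat f.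
apply: sle_trans (walk_weight_drop_cycle ab bn (leq_trans bn nm) fab) _.
set f' := fun t => _.
have f'0 : f' 0%N = f 0%N.
  rewrite /f'; case: ifP => // /negbT; rewrite -leqNgt leqn0 => /eqP a0.
  by rewrite add0n a0 subn0 -fab a0.
have f'm : f' (m - (b - a))%N = f m.
  by rewrite /f' ifF; [congr f; lia | apply/negbTE; rewrite -leqNgt; lia].
by rewrite -f'0 -f'm; apply: IHm; lia.
Qed.

Lemma mpow_le_mstar k i j : mpow C k i j ≼ mstar C i j.
Proof.
have [->|[f [<- <- ->]]] := mpow_walk k i j; first exact: sle0x.
exact: walk_weight_le_mstar.
Qed.

Lemma mul_mstar_le i l j : C i l ⊗ mstar C l j ≼ mstar C i j.
Proof.
rewrite /mstar smul_bigr; apply: bigI_sle => k; apply: sle_trans (mpow_le_mstar k.+1 i j).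
exact: (sle_bigI (fun l => C i l ⊗ mpow C k l j)).
Qed.

Lemma mvec_mul_mstar_le u i : mvec C (mvec (mstar C) u) i ≼ mvec (mstar C) u i.
Proof.
apply: bigI_sle => l; rewrite /mvec smul_bigr; apply: bigI_sle => j.
by rewrite mulA; apply: sle_trans (sle_mul2r _ (mul_mstar_le i l j)) (mvec_term _ _ i j).
Qed.

End KleeneStar.

Section Problem.
Variables (X : isemifield) (n : nat) (A : mat X n) (p g q h : vec X n) (r : X).
Implicit Types (x u : vec X n) (t : X).

Definition objective x : X :=
  sadd (sadd (sadd (dot (conj x) (mvec A x)) (dot (conj x) p)) (dot (conj q) x)) r.

Definition min_value : X :=
  sadd (sadd (sadd (sadd (specrad A)
    (\big[sadd/szero]_(1 <= k < n) sroot k (dot (conj h) (mvec (mpow A k) g))))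
    (\big[sadd/szero]_(0 <= k < n)
        sroot k.+1 (sadd (dot (conj q) (mvec (mpow A k) g))
                        (dot (conj h) (mvec (mpow A k) p)))))
    (\big[sadd/szero]_(0 <= k < n) sroot k.+2 (dot (conj q) (mvec (mpow A k) p))))
    r.

Hypotheses (q_reg : regular q) (h_reg : regular h).

Lemma objective_leP x t : regular x ->
  objective x ≼ t <->
  [/\ forall i, mvec A x i ≼ t ⊗ x i, forall i, p i ≼ t ⊗ x i,
      forall i, sinv (q i) ⊗ x i ≼ t & r ≼ t].
Proof.
move=> x_reg; rewrite /objective !sadd_leP /dot !bigI_sleP.
have cx i : conj x i = sinv (x i) := conjE (x_reg i).
have cq i : conj q i = sinv (q i) := conjE (q_reg i).
split=> [[[[Ax px] qx] rt] | [Ax px qx rt]].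
  split=> // i; last by rewrite -cq.
    by rewrite -(sle_invMl _ _ (x_reg i)) -cx.
  by rewrite -(sle_invMl _ _ (x_reg i)) -cx.
split=> //; split; [split|] => i; last by rewrite cq.
  by rewrite cx (sle_invMl _ _ (x_reg i)).
by rewrite cx (sle_invMl _ _ (x_reg i)).
Qed.

Lemma min_value_le x : regular x -> vle g x -> vle x h -> min_value ≼ objective x.
Proof.
move=> x_reg gx xh; set t := objective x.
have [Ax px qx rt] := proj1 (objective_leP t x_reg) (sle_refl t).
have ch i : conj h i = sinv (h i) := conjE (h_reg i).
have cq i : conj q i = sinv (q i) := conjE (q_reg i).
have Akx k i : mvec (mpow A k) x i ≼ spow t k ⊗ x i := mvec_mpow_le k i Ax.
have Akg k i : mvec (mpow A k) g i ≼ spow t k ⊗ x i := sle_trans (mvec_le _ _ gx) (Akx k i).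
have Akp k i : mvec (mpow A k) p i ≼ spow t k.+1 ⊗ x i.
  apply: sle_trans (mvec_le _ (v := vscale t x) _ px) _.
  by rewrite mvec_vscale spowS -mulA; apply: sle_mul2l.
have hx c i : sinv (h i) ⊗ (c ⊗ x i) ≼ c.
  by rewrite mulCA -{2}(mulx1 c); apply: sle_mul2l; rewrite (sle_invMl _ _ (h_reg i)) mul1x.
have qx' c i : sinv (q i) ⊗ (c ⊗ x i) ≼ t ⊗ c.
  by rewrite mulCA mulC; apply: sle_mul2r; apply: qx.
rewrite /min_value /specrad; repeat apply: sadd_le => //;
  apply: big_sle => k; rewrite mem_index_iota => /andP[k_lb k_ub] _; apply/sroot_leP => //.
- apply: bigI_sle => i; rewrite -(sle_pmul2l _ _ (x_reg i)) !(mulC (x i)).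
  exact: sle_trans (mvec_term _ _ i i) (Akx k i).
- by apply: bigI_sle => i; rewrite ch; apply: sle_trans (sle_mul2l _ (Akg k i)) (hx _ i).
- apply: sadd_le; apply: bigI_sle => i; rewrite ?cq ?ch.
    by apply: sle_trans (sle_mul2l _ (Akg k i)) (qx' _ i).
  by apply: sle_trans (sle_mul2l _ (Akp k i)) (hx _ i).
- apply: bigI_sle => i; rewrite cq; apply: sle_trans (sle_mul2l _ (Akp k i)) _.
  exact: qx'.
Qed.

Lemma min_value_summands :
  [/\ specrad A ≼ min_value,
      \big[sadd/szero]_(1 <= k < n) sroot k (dot (conj h) (mvec (mpow A k) g)) ≼ min_value,
      \big[sadd/szero]_(0 <= k < n)
        sroot k.+1 (dot (conj q) (mvec (mpow A k) g) ⊕ dot (conj h) (mvec (mpow A k) p))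
        ≼ min_value,
      \big[sadd/szero]_(0 <= k < n) sroot k.+2 (dot (conj q) (mvec (mpow A k) p)) ≼ min_value
    & r ≼ min_value].
Proof. by have := sle_refl min_value; rewrite {1}/min_value !sadd_leP => -[[[[]]]]. Qed.

Lemma mtr_mpow_le_min_value k :
  (0 < k)%N -> (k <= n)%N -> mtr (mpow A k) ≼ spow min_value k.
Proof.
move=> k0 kn; have [lam _ _ _ _] := min_value_summands.
by apply: (sle_big_sroot _ _ lam); rewrite ?k0.
Qed.

Lemma dot_qAg_hAp_le_min_value k : (k < n)%N ->
  dot (conj q) (mvec (mpow A k) g) ⊕ dot (conj h) (mvec (mpow A k) p) ≼ spow min_value k.+1.
Proof. by move=> kn; have [_ _ S2 _ _] := min_value_summands; apply: (sle_big_sroot _ _ S2). Qed.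

Lemma dot_qAp_le_min_value k : (k < n)%N ->
  dot (conj q) (mvec (mpow A k) p) ≼ spow min_value k.+2.
Proof. by move=> kn; have [_ _ _ S3 _] := min_value_summands; apply: (sle_big_sroot _ _ S3). Qed.

Lemma min_value_neq0 : (0 < n)%N ->
  sadd (sadd (specrad A) (sroot 2 (dot (conj q) p))) r != szero -> min_value != szero.
Proof.
move=> n0; apply: sle_neq0; have [lam _ _ _ r_le] := min_value_summands.
repeat apply: sadd_le => //; rewrite sroot_leP // -{1}(mvec_mpow0 A p).
exact: dot_qAp_le_min_value.
Qed.

Hypothesis hg_le1 : dot (conj h) g ≼ sone.

Lemma dot_hAg_le_min_value k : (k < n)%N ->
  dot (conj h) (mvec (mpow A k) g) ≼ spow min_value k.
Proof.
case: k => [|k] kn; first by rewrite mvec_mpow0.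
by have [_ S1 _ _ _] := min_value_summands; apply: (sle_big_sroot _ _ S1).
Qed.

Section Solutions.
Hypothesis nz_min_value : min_value != szero.

Let C := mscale (sinv min_value) A.
Let B := mstar C.
Let d := vadd (vscale (sinv min_value) (conj q)) (conj h).
Let w := vecm d B.
Let lb := vadd (vscale (sinv min_value) p) g.

Lemma mtr_mpow_scaled_le1 k : (0 < k)%N -> (k <= n)%N -> mtr (mpow C k) ≼ sone.
Proof.
move=> k0 kn; apply: bigI_sle => i; rewrite mpow_mscale -(spowVx k nz_min_value).
apply: sle_mul2l; apply: sle_trans (mtr_mpow_le_min_value k0 kn).
exact: (sle_bigI (fun i => mpow A k i i)).
Qed.

Lemma mvec_scaled_leP x i : mvec C x i ≼ x i <-> mvec A x i ≼ min_value ⊗ x i.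
Proof. by rewrite mvec_mscale (sle_invMl _ _ nz_min_value) mulC. Qed.

Lemma d_mul_leP x i :
  d i ⊗ x i ≼ sone <-> sinv (q i) ⊗ x i ≼ min_value /\ x i ≼ h i.
Proof.
rewrite mulDl sadd_leP -mulA (conjE (q_reg i)) (conjE (h_reg i)).
by rewrite (sle_invMl _ _ nz_min_value) (sle_invMl _ _ (h_reg i)) !mul1x.
Qed.

Lemma w_neq0 j : w j != szero.
Proof.
apply: (@sle_neq0 _ (conj h j)); last by rewrite conjE ?inv_neq0.
apply: sle_trans (sle_bigI (fun i => d i ⊗ B i j) j).
by rewrite -{1}(mulx1 (conj h j)); apply: sle_mul2; [apply: sle_addr | apply: mstar_diag_ge1].
Qed.

Lemma sle_conj_wP c j : c ≼ conj w j <-> w j ⊗ c ≼ sone.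
Proof. by rewrite conjE ?w_neq0 // sle_invr ?w_neq0. Qed.

Lemma mstar_conj_w_regular : regular (mvec B (conj w)).
Proof.
move=> i; apply: sle_neq0 (mvec_mstar_ge C _ i) _.
by rewrite conjE ?inv_neq0 ?w_neq0.
Qed.

Lemma d_mul_mstar_le1 u i : vle u (conj w) -> d i ⊗ mvec B u i ≼ sone.
Proof.
move=> u_ub; rewrite /mvec smul_bigr; apply: bigI_sle => j; rewrite mulA.
apply: sle_trans (sle_mul2r _ (sle_bigI (fun i => d i ⊗ B i j) i)) _.
exact/sle_conj_wP/u_ub.
Qed.

Lemma solution_of_bounds u : vle lb u -> vle u (conj w) -> regular (mvec B u) ->
  [/\ vle g (mvec B u), vle (mvec B u) h & objective (mvec B u) = min_value].
Proof.
move=> lb_u u_ub x_reg; set x := mvec B u.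
have ux i : u i ≼ x i := mvec_mstar_ge C u i.
have lbu i := proj1 (sadd_leP _ _ _) (lb_u i).
have gx i : g i ≼ x i := sle_trans (proj2 (lbu i)) (ux i).
have dx i := proj1 (d_mul_leP _ _) (d_mul_mstar_le1 i u_ub).
have [_ _ _ _ r_le] := min_value_summands.
have Fx : objective x ≼ min_value.
  apply/objective_leP => //; split=> // i; last exact: (proj1 (dx i)).
    exact/mvec_scaled_leP/(mvec_mul_mstar_le mtr_mpow_scaled_le1).
  rewrite mulC -(sle_invMl _ _ nz_min_value).
  exact: sle_trans (proj1 (lbu i)) (ux i).
have xh i : x i ≼ h i := proj2 (dx i).
by split=> //; apply: sle_anti Fx (min_value_le x_reg gx xh).
Qed.

Lemma bounds_of_solution x : regular x -> vle g x -> vle x h -> objective x = min_value ->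
  [/\ vle lb x, vle x (conj w) & mvec B x = x].
Proof.
move=> x_reg gx xh Fx.
have := sle_refl min_value; rewrite -{1}Fx => /(objective_leP _ x_reg) [Ax px qx _].
have Bx : mvec B x = x by apply: mvec_mstar_id => i; apply/mvec_scaled_leP.
have dx i : d i ⊗ x i ≼ sone by apply/d_mul_leP.
split=> // i.
  by apply: sadd_le (gx i); rewrite (sle_invMl _ _ nz_min_value) mulC.
apply/sle_conj_wP; rewrite smul_bigl; apply: bigI_sle => j.
rewrite -mulA; apply: sle_trans (dx j); apply: sle_mul2l.
by rewrite -{2}Bx; apply: mvec_term.
Qed.

(* Each of the four products d_i (C^k)_ij lb_j is a term of theta scaled by a power of theta^-1. *)
Lemma lb_le_conj_w : vle lb (conj w).
Proof.
move=> j; apply/sle_conj_wP; rewrite smul_bigl; apply: bigI_sle => i.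
rewrite /B /mstar smul_bigr smul_bigl; apply: bigI_sle => k; have kn := ltn_ord k.
have term_le1 a b (u v : vec X n) m :
    a ⊗ spow (sinv min_value) k ⊗ b = spow (sinv min_value) m ->
    dot u (mvec (mpow A k) v) ≼ spow min_value m ->
    a ⊗ u i ⊗ (spow (sinv min_value) k ⊗ mpow A k i j) ⊗ (b ⊗ v j) ≼ sone.
  rewrite mul_interchange3 => -> uv; rewrite -(spowVx m nz_min_value); apply: sle_mul2l.
  apply: sle_trans uv; rewrite -mulA; apply: sle_trans (dot_term _ _ i).
  by apply: sle_mul2l; apply: mvec_term.
have [qAg hAp] := proj1 (sadd_leP _ _ _) (dot_qAg_hAp_le_min_value kn).
rewrite mpow_mscale /d /lb /vadd /vscale -[conj h i]mul1x -[g j]mul1x !mulDr !mulDl.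
repeat apply: sadd_le.
- by apply: (term_le1 _ _ _ _ k.+2 _ (dot_qAp_le_min_value kn)); rewrite mulC.
- by apply: (term_le1 _ _ _ _ k.+1 _ hAp); rewrite mul1x mulC.
- by apply: (term_le1 _ _ _ _ k.+1 _ qAg); rewrite mulx1.
- by apply: (term_le1 _ _ _ _ k _ (dot_hAg_le_min_value kn)); rewrite mul1x mulx1.
Qed.

End Solutions.

End Problem.

Theorem corollary1 (X : isemifield) (n : nat) (Hn : (1 <= n)%N)
  (A : mat X n) (p g q h : vec X n) (r : X)
  (Hq : regular q) (Hh : regular h)
  (Hhg : sle (dot (conj h) g) sone)
  (Hpos : sadd (sadd (specrad A) (sroot 2 (dot (conj q) p))) r != szero) :
  let lam := specrad A in
  let F := fun x : vec X n =>
    sadd (sadd (sadd (dot (conj x) (mvec A x)) (dot (conj x) p)) (dot (conj q) x)) r in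
  let theta :=
    sadd (sadd (sadd (sadd lam
      (\big[sadd/szero]_(1 <= k < n) sroot k (dot (conj h) (mvec (mpow A k) g))))
      (\big[sadd/szero]_(0 <= k < n)
          sroot k.+1 (sadd (dot (conj q) (mvec (mpow A k) g))
                          (dot (conj h) (mvec (mpow A k) p)))))
      (\big[sadd/szero]_(0 <= k < n) sroot k.+2 (dot (conj q) (mvec (mpow A k) p))))
      r in
  let B := mstar (mscale (sinv theta) A) in
  let ub := conj (vecm (vadd (vscale (sinv theta) (conj q)) (conj h)) B) in
  (* theta is the minimum value *)
  (forall x : vec X n, regular x -> vle g x -> vle x h -> sle theta (F x)) /\
  (exists x : vec X n, [/\ regular x, vle g x, vle x h & F x = theta]) /\
  (* characterization of all regular solutions *)
  (forall x : vec X n, regular x ->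
     ((vle g x /\ vle x h /\ F x = theta) <->
      exists u : vec X n,
        [/\ vle (vadd (vscale (sinv theta) p) g) u, vle u ub & x = mvec B u])).
Proof.
move=> lam F theta B ub.
have theta_neq0 : theta != szero := min_value_neq0 g h Hn Hpos.
split; first exact: min_value_le.
split.
  exists (mvec B ub).
  have x_reg : regular (mvec B ub) by apply: mstar_conj_w_regular.
  have lb_ub := lb_le_conj_w Hh Hhg theta_neq0.
  by have [] := solution_of_bounds Hq Hh theta_neq0 lb_ub (fun i => sle_refl _) x_reg.
move=> x x_reg; split=> [[gx [xh Fx]] | [u [lb_u u_ub x_def]]].
  have [lb_x x_ub Bx] := bounds_of_solution Hq Hh theta_neq0 x_reg gx xh Fx.
  by exists x; rewrite Bx.
rewrite x_def in x_reg *.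
by have [] := solution_of_bounds Hq Hh theta_neq0 lb_u u_ub x_reg.
Qed.
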